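(* Let $A\in\mathbb{C}^{n\times n}$, $k=\mathrm{Ind}(A)$, let $l\ge k$ be an integer and $m\in\mathbb{N}=\{1,2,\dots\}$. Then: (a) $A^{\#_m}AA^{\#_m}=A^{\#_m}$; (b) $A_1A^{\#_m}A_1=A_1$ and $A^{\#_m}A_1A^{\#_m}=A^{\#_m}$, where $A_1=AA^{\mathrm{cEP}}A$; (c) $A(A^{\#_m})^2=A^{\#_m}$; (d) $A^{\#_m}A^{l+1}=A^l$; (e) $A^{\#_m}=(A^d)^{m+1}P_{A^l}A^mP_{A^m}$; (f) $A^{\#_m}=A^l(A^{l+m+1})^\dagger A^mP_{A^m}$; (g) $\mathrm{rk}(A^{\#_m})=\mathrm{rk}(A^k)$; (h) $\mathcal{R}(A^{\#_m})=\mathcal{R}(A^k)$; (i) $\mathcal{N}(A^{\#_m})=\mathcal{N}((A^k)^*A^mP_{A^m})$; (j) $A^{\#_m}A^{m+1}=(A^{\mathrm{cEP}})^{m+1}A^{2m+1}$.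
   Context: For $A\in\mathbb{C}^{n\times n}$: $A^*$ conjugate transpose, $A^\dagger$ Moore–Penrose inverse, $\mathcal{R}(\cdot)$, $\mathcal{N}(\cdot)$ column space and null space, $\mathrm{rk}$ rank, $P_A=AA^\dagger$, $A^0=I_n$. The index $\mathrm{Ind}(A)$ is the smallest nonnegative integer $k$ with $\mathcal{R}(A^k)=\mathcal{R}(A^{k+1})$. $A^d$ is the Drazin inverse (unique $X$ with $XAX=X$, $AX=XA$, $XA^{k+1}=A^k$). The core-EP inverse $A^{\mathrm{cEP}}$ is the unique $X$ with $XAX=X$ and $\mathcal{R}(X)=\mathcal{R}(X^* )=\mathcal{R}(A^k)$. For $m\in\mathbb{N}$, the $m$-weak group inverse is $A^{\mathrm{WG}_m}:=(A^{\mathrm{cEP}})^{m+1}A^m$ and the $m$-weak core inverse is $A^{\#_m}:=A^{\mathrm{WG}_m}P_{A^m}$. *)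

From HB Require Import structures.
From mathcomp Require Import all_boot all_order all_algebra.
From mathcomp Require Import boolp classical_sets.
From mathcomp Require Import complex.
From mathcomp Require Import Rstruct.
Set Implicit Arguments. Unset Strict Implicit. Unset Printing Implicit Defensive.
Import Order.TTheory GRing.Theory Num.Theory.
Local Open Scope ring_scope.

Section GenInv.
Variable C : numClosedFieldType.
Variable n : nat.
Implicit Types A X : 'M[C]_n.

Definition ctmx (p q : nat) (M : 'M[C]_(p, q)) : 'M[C]_(q, p) :=
  (map_mx Num.conj M)^T.

(* column space R(M) represented (via transposition) as a row space;
   R(M) = R(N) is  (colsp M == colsp N)%MS *)
Definition colsp (p q : nat) (M : 'M[C]_(p, q)) : 'M[C]_(q, p) := M^T.

(* null space N(M) = {v | M v = 0}, represented as the row space of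
   kermx M^T, whose rows u satisfy u *m M^T = 0, i.e. M *m u^T = 0 *)
Definition nullsp (p q : nat) (M : 'M[C]_(p, q)) : 'M[C]_q := kermx M^T.

Definition is_MP A X : Prop :=
  [/\ A *m X *m A = A, X *m A *m X = X,
      ctmx (A *m X) = A *m X & ctmx (X *m A) = X *m A].

Definition mpinv A : 'M[C]_n := xget 0 (is_MP A).

Definition projP A : 'M[C]_n := A *m mpinv A.

Definition is_index A (k : nat) : Prop :=
  (colsp (A ^+ k) == colsp (A ^+ k.+1))%MS /\
  (forall j, (j < k)%N -> ~~ (colsp (A ^+ j) == colsp (A ^+ j.+1))%MS).

Definition ind A : nat := xget 0%N (is_index A).

Definition is_drazin A X : Prop :=
  [/\ X *m A *m X = X, A *m X = X *m A & X *m A ^+ (ind A).+1 = A ^+ ind A].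

Definition drazin A : 'M[C]_n := xget 0 (is_drazin A).

Definition is_coreEP A X : Prop :=
  [/\ X *m A *m X = X, (colsp X == colsp (A ^+ ind A))%MS
    & (colsp (ctmx X) == colsp (A ^+ ind A))%MS].

Definition coreEP A : 'M[C]_n := xget 0 (is_coreEP A).

Definition wg A (m : nat) : 'M[C]_n := (coreEP A) ^+ m.+1 *m A ^+ m.
Definition wcore A (m : nat) : 'M[C]_n := wg A m *m projP (A ^+ m).

End GenInv.

Notation Cplx := (Rdefinitions.R[i]).

From HB Require Import structures.
From mathcomp Require Import all_boot all_order all_algebra.
From mathcomp Require Import boolp classical_sets.
From mathcomp Require Import complex.
From mathcomp Require Import Rstruct.
Import Order.TTheory GRing.Theory Num.Theory.
Local Open Scope ring_scope.
Set Implicit Arguments. Unset Strict Implicit. Unset Printing Implicit Defensive.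

(* The core-EP inverse is C := A^d P_{A^k}, the Drazin inverse followed by the
   orthogonal projector onto R(A^k).  Everything then follows from a handful of
   identities: A C = P_{A^k}, C P_{A^k} = C, C A^{j+1} = A^j for j >= k, and
   C^j A^j P_{A^k} = P_{A^k}; moreover P_{A^m} fixes R(A^k), which lies in every
   R(A^m).  For A^{#_m} = C^{m+1} A^m P_{A^m} this gives the generalized-inverse
   identities directly; its range is R(A^k) because A^{#_m} = P_{A^k} A^{#_m} and
   A^k = A^{#_m} A^{k+1}, and its null space is that of (A^k)^* A^m P_{A^m}
   because P_{A^k} = ((A^k)^dagger)^* (A^k)^* and P_{A^k} = A^{m+1} C^{m+1}. *)

Section ConjugateTranspose.
Variable C : numClosedFieldType.

Lemma ctmxM p q r (M : 'M[C]_(p, q)) (N : 'M[C]_(q, r)) :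
  ctmx (M *m N) = ctmx N *m ctmx M.
Proof. by rewrite /ctmx map_mxM trmx_mul. Qed.

Lemma ctmxK p q (M : 'M[C]_(p, q)) : ctmx (ctmx M) = M.
Proof. by apply/matrixP => i j; rewrite !mxE conjCK. Qed.

Lemma mxrank_ctmx p q (M : 'M[C]_(p, q)) : \rank (ctmx M) = \rank M.
Proof. by rewrite /ctmx mxrank_tr (mxrank_map Num.conj). Qed.

Lemma ctmx_invmx p (M : 'M[C]_p) : ctmx (invmx M) = invmx (ctmx M).
Proof. by rewrite /ctmx map_invmx trmx_inv. Qed.

Lemma mulmx_ctmx_eq0 p q (M : 'M[C]_(p, q)) : M *m ctmx M = 0 -> M = 0.
Proof.
move=> MM0; apply/matrixP => i j; rewrite mxE.
have := congr1 (fun N : 'M[C]_p => N i i) MM0; rewrite !mxE.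
under eq_bigr do rewrite !mxE -normCK.
move/psumr_eq0P => /(_ (fun l _ => exprn_ge0 2 (normr_ge0 _)) j isT) /eqP.
by rewrite sqrf_eq0 normr_eq0 => /eqP.
Qed.

Lemma row_free_gram_unit p q (M : 'M[C]_(p, q)) :
  row_free M -> M *m ctmx M \in unitmx.
Proof.
move=> /row_freeP [B MB]; rewrite -row_free_unit -kermx_eq0; apply/eqP.
set u := kermx _; have uMM : u *m M *m ctmx M = 0 by rewrite -mulmxA mulmx_ker.
have uM : u *m M = 0.
  by apply: mulmx_ctmx_eq0; rewrite ctmxM mulmxA uMM mul0mx.
by rewrite -[u]mulmx1 -MB mulmxA uM mul0mx.
Qed.

Lemma exists_MP n (A : 'M[C]_n) : exists X, is_MP A X.
Proof.
have AFG : A = col_base A *m row_base A by rewrite mulmx_base.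
have FF : ctmx (col_base A) *m col_base A \in unitmx.
  have := row_free_gram_unit (M := ctmx (col_base A)); rewrite ctmxK; apply.
  by rewrite /row_free mxrank_ctmx; exact: col_base_full.
have GG := row_free_gram_unit (row_base_free A).
move: (col_base A) (row_base A) AFG FF GG; move: (\rank A) => r F G AFG FF GG.
set a := invmx (G *m ctmx G); set b := invmx (ctmx F *m F).
have ca : ctmx a = a by rewrite ctmx_invmx ctmxM ctmxK.
have cb : ctmx b = b by rewrite ctmx_invmx ctmxM ctmxK.
have GGa : G *m ctmx G *m a = 1%:M by rewrite mulmxV.
have bFF : b *m (ctmx F *m F) = 1%:M by rewrite mulVmx.
(* With the full-rank factorization A = F G, A^dagger = G^* (G G^* )^-1 (F^* F)^-1 F^*. *)
exists (ctmx G *m a *m b *m ctmx F).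
have AX : A *m (ctmx G *m a *m b *m ctmx F) = F *m b *m ctmx F.
  have -> : A *m (ctmx G *m a *m b *m ctmx F) =
            F *m (G *m ctmx G *m a) *m b *m ctmx F by rewrite AFG !mulmxA.
  by rewrite GGa mulmx1.
have XA : ctmx G *m a *m b *m ctmx F *m A = ctmx G *m a *m G.
  have -> : ctmx G *m a *m b *m ctmx F *m A =
            ctmx G *m a *m (b *m (ctmx F *m F)) *m G by rewrite AFG !mulmxA.
  by rewrite bFF mulmx1.
split.
- rewrite AX; have -> : F *m b *m ctmx F *m A = F *m (b *m (ctmx F *m F)) *m G.
    by rewrite AFG !mulmxA.
  by rewrite bFF mulmx1 -AFG.
- rewrite XA; have -> : ctmx G *m a *m G *m (ctmx G *m a *m b *m ctmx F) =
                   ctmx G *m (a *m (G *m ctmx G *m a)) *m b *m ctmx F.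
    by rewrite !mulmxA.
  by rewrite GGa mulmx1.
- by rewrite AX !ctmxM ctmxK cb mulmxA.
- by rewrite XA !ctmxM ctmxK ca mulmxA.
Qed.

End ConjugateTranspose.

Section Subspaces.
Variable C : numClosedFieldType.

Lemma colsp_mulmx p q r (X : 'M[C]_(p, q)) (Z : 'M[C]_(q, r)) :
  (colsp (X *m Z) <= colsp X)%MS.
Proof. by rewrite /colsp trmx_mul submxMl. Qed.

Lemma colsp_subP p q r (X : 'M[C]_(p, q)) (Y : 'M[C]_(p, r)) :
  reflect (exists Z, X = Y *m Z) (colsp X <= colsp Y)%MS.
Proof.
apply: (iffP submxP) => [[Z XZ]|[Z ->]]; last by exists Z^T; rewrite /colsp trmx_mul.
by exists Z^T; rewrite -[X]trmxK [X^T]XZ trmx_mul trmxK.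
Qed.

Lemma nullsp_mulmx p q r (Z : 'M[C]_(p, q)) (Y : 'M[C]_(q, r)) :
  (nullsp Y <= nullsp (Z *m Y))%MS.
Proof. by rewrite /nullsp sub_kermx trmx_mul mulmxA mulmx_ker mul0mx. Qed.

Lemma mxrank_colsp p q (X : 'M[C]_(p, q)) : \rank (colsp X) = \rank X.
Proof. exact: mxrank_tr. Qed.

End Subspaces.

Section MoorePenrose.
Variables (C : numClosedFieldType) (n : nat).
Implicit Types X Y : 'M[C]_n.

Lemma mpinvP X : is_MP X (mpinv X).
Proof. exact: (xgetPex 0 (exists_MP X)). Qed.

Lemma projPE X : projP X = X * mpinv X.
Proof. by []. Qed.

Lemma projP_self X : projP X * X = X.
Proof. by case: (mpinvP X). Qed.

Lemma ctmx_projP X : ctmx (projP X) = projP X.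
Proof. by case: (mpinvP X). Qed.

Lemma projP_ctmxE X : projP X = ctmx (mpinv X) * ctmx X.
Proof. by rewrite -ctmx_projP /projP ctmxM. Qed.

Lemma projP_idem X : projP X * projP X = projP X.
Proof. by rewrite {2}projPE mulrA projP_self. Qed.

Lemma projP_fix X Y : (colsp Y <= colsp X)%MS -> projP X * Y = Y.
Proof. by move/colsp_subP => [Z ->]; rewrite mulmxE mulrA projP_self. Qed.

Lemma ctmx_mul_projP X : ctmx X * projP X = ctmx X.
Proof. by rewrite -ctmx_projP -mulmxE -ctmxM mulmxE projP_self. Qed.

Lemma projP_eq X Y : (colsp X == colsp Y)%MS -> projP X = projP Y.
Proof.
move=> /andP [XY YX].
have XPY : projP X * projP Y = projP Y by rewrite /projP mulmxE mulrA projP_fix.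
have YPX : projP Y * projP X = projP X by rewrite /projP mulmxE mulrA projP_fix.
by rewrite -[LHS]ctmx_projP -YPX -mulmxE ctmxM !ctmx_projP mulmxE XPY.
Qed.

End MoorePenrose.

Section IndexPowers.
Variables (R : pzRingType) (a : R) (k : nat).

Lemma rinv_exprS y : a ^+ k.+1 * y = a ^+ k ->
  forall i, (k <= i)%N -> a ^+ i.+1 * y = a ^+ i.
Proof. by move=> ay i ki; rewrite -(subnK ki) -addnS !exprD -mulrA ay. Qed.

Lemma rinv_exprD y : a ^+ k.+1 * y = a ^+ k -> forall j, a ^+ (k + j) * y ^+ j = a ^+ k.
Proof.
move=> ay; elim=> [|j IHj]; first by rewrite addn0 mulr1.
by rewrite addnS (exprS y) mulrA rinv_exprS ?leq_addr.
Qed.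

Lemma linv_exprS w : w * a ^+ k.+1 = a ^+ k ->
  forall i, (k <= i)%N -> w * a ^+ i.+1 = a ^+ i.
Proof. by move=> wa i ki; rewrite -(subnKC ki) -addSn !exprD mulrA wa. Qed.

Lemma linv_exprD w : w * a ^+ k.+1 = a ^+ k -> forall j, w ^+ j * a ^+ (k + j) = a ^+ k.
Proof.
move=> wa; elim=> [|j IHj]; first by rewrite addn0 mul1r.
by rewrite addnS (exprSr w) -mulrA linv_exprS ?leq_addr.
Qed.

Lemma exists_drazin_ring y w : a ^+ k.+1 * y = a ^+ k -> w * a ^+ k.+1 = a ^+ k ->
  exists d, [/\ d * a * d = d, a * d = d * a & d * a ^+ k.+1 = a ^+ k].
Proof.
move=> ay wa; have ayX := rinv_exprD ay; have waX := linv_exprD wa.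
have yw : a ^+ k * y ^+ k = w ^+ k * a ^+ k by rewrite -{1}(waX k) -mulrA ayX.
exists (a ^+ k * y ^+ k.+1).
have dw : a ^+ k * y ^+ k.+1 = w ^+ k.+1 * a ^+ k by rewrite -[in RHS](ayX k.+1) mulrA waX.
have ad : a * (a ^+ k * y ^+ k.+1) = a ^+ k * y ^+ k.
  by rewrite mulrA -exprS (exprS y) mulrA ay.
have da : a ^+ k * y ^+ k.+1 * a = w ^+ k * a ^+ k.
  by rewrite dw -mulrA -exprSr exprSr -mulrA wa.
split.
- by rewrite da mulrA -(mulrA (w ^+ k)) -exprD waX.
- by rewrite ad da yw.
- by rewrite dw -mulrA -exprD waX.
Qed.

End IndexPowers.

Section DrazinInverse.
Variables (R : pzRingType) (a d : R).
Hypotheses (dad : d * a * d = d) (ad_da : a * d = d * a).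

Lemma drazinX_expr j : d ^+ j.+1 * a ^+ j = d.
Proof.
have dda : d * (d * a) = d by rewrite -ad_da mulrA dad.
elim: j => [|j IHj]; first by rewrite expr1 mulr1.
rewrite (exprSr d) (exprS a) mulrA -(mulrA _ d a) (exprSr d j).
by rewrite -(mulrA _ d (d * a)) dda -exprSr IHj.
Qed.

Lemma drazin_range k : d = a ^+ k * d ^+ k.+1.
Proof.
have ad_comm : GRing.comm (a ^+ k) (d ^+ k.+1).
  by apply/commrX/commr_sym/commrX; exact: esym ad_da.
by rewrite ad_comm drazinX_expr.
Qed.

End DrazinInverse.

Section Index.
Variables (C : numClosedFieldType) (n : nat) (A : 'M[C]_n).
Local Notation k := (ind A).

Lemma colsp_exprS_sub j : (colsp (A ^+ j.+1) <= colsp (A ^+ j))%MS.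
Proof. by rewrite exprSr -mulmxE colsp_mulmx. Qed.

Lemma exists_index : exists k, is_index A k.
Proof.
pose stable j := (colsp (A ^+ j) == colsp (A ^+ j.+1))%MS.
have [stable_ex | unstable] := pselect (exists j, stable j); last first.
  have rank_drop j : (\rank (colsp (A ^+ j)) + j <= n)%N.
    elim: j => [|j IHj]; first by rewrite addn0 rank_leq_row.
    apply: leq_trans IHj; rewrite addnS ltn_add2r.
    rewrite (ltn_leqif (mxrank_leqif_eq (colsp_exprS_sub j))) /eqmx andbC.
    by apply/negP => Sj; apply: unstable; exists j.
  by have := rank_drop n.+1; rewrite addnS ltnNge leq_addl.
exists (ex_minn stable_ex); case: ex_minnP => i Si min_i; split => // j lt_ji.
by apply/negP => Sj; have := min_i j Sj; rewrite leqNgt lt_ji.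
Qed.

Lemma indexP : is_index A k.
Proof. exact: (xgetPex 0%N exists_index). Qed.

Lemma ind_rinv : exists Y, A ^+ k.+1 * Y = A ^+ k.
Proof.
have [/andP [/colsp_subP [Y AY] _] _] := indexP.
by exists Y; rewrite AY.
Qed.

Lemma ind_linv : exists W, W * A ^+ k.+1 = A ^+ k.
Proof.
have [Sk _] := indexP.
have rank_k : \rank (A ^+ k.+1) = \rank (A ^+ k).
  by rewrite -[LHS]mxrank_tr -[RHS]mxrank_tr (eqmx_rank Sk).
have sub_k : (A ^+ k.+1 <= A ^+ k)%MS by rewrite exprS -mulmxE submxMl.
have := (mxrank_leqif_eq sub_k).2; rewrite rank_k eqxx => /esym/andP [_ /submxP [W AW]].
by exists W; rewrite AW mulmxE.
Qed.

Lemma colsp_expr_ind_sub i j : (k <= i)%N -> (colsp (A ^+ i) <= colsp (A ^+ j))%MS.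
Proof.
move=> ki; apply/colsp_subP; have [Y AY] := ind_rinv.
have [ji | ij] := leqP j i.
  by exists (A ^+ (i - j)); rewrite mulmxE -exprD subnKC.
exists (Y ^+ (j - i)); rewrite mulmxE.
by rewrite -{1}(rinv_exprD (rinv_exprS AY ki) (j - i)) subnKC // ltnW.
Qed.

Lemma colsp_expr_ind i : (k <= i)%N -> (colsp (A ^+ i) == colsp (A ^+ k))%MS.
Proof. by move=> ki; rewrite /eqmx !colsp_expr_ind_sub. Qed.

Lemma projP_expr_ind i j : (k <= i)%N -> projP (A ^+ j) * A ^+ i = A ^+ i.
Proof. by move=> ki; rewrite projP_fix ?colsp_expr_ind_sub. Qed.

Lemma projP_expr_ind_eq i : (k <= i)%N -> projP (A ^+ i) = projP (A ^+ k).
Proof. by move=> ki; rewrite (projP_eq (colsp_expr_ind ki)). Qed.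

Lemma projP_projP_ind i : projP (A ^+ i) * projP (A ^+ k) = projP (A ^+ k).
Proof. by rewrite projPE mulrA projP_expr_ind. Qed.

Lemma drazinP : is_drazin A (drazin A).
Proof.
apply: (xgetPex 0); have [Y AY] := ind_rinv; have [W WA] := ind_linv.
by have [d dP] := exists_drazin_ring AY WA; exists d.
Qed.

End Index.

Section CoreEP.
Variables (C : numClosedFieldType) (n : nat) (A : 'M[C]_n).
Local Notation k := (ind A).
Local Notation D := (drazin A).
Local Notation P := (projP (A ^+ ind A)).
Local Notation Ce := (coreEP A).

Lemma drazin_outer : D * A * D = D. Proof. by case: (drazinP A). Qed.
Lemma drazin_comm : A * D = D * A. Proof. by case: (drazinP A). Qed.
Lemma drazin_exprS : D * A ^+ k.+1 = A ^+ k. Proof. by case: (drazinP A). Qed.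

Lemma projP_drazin : P * D = D.
Proof. by rewrite (drazin_range drazin_outer drazin_comm k) mulrA projP_self. Qed.

Lemma is_coreEP_drazin : is_coreEP A (D * P).
Proof.
have DP_k : D * P * A ^+ k.+1 = A ^+ k.
  by rewrite -mulrA projP_expr_ind // drazin_exprS.
have DP_range : D * P = A ^+ k * (D ^+ k.+1 * P).
  by rewrite mulrA -(drazin_range drazin_outer drazin_comm).
have colsp_DP : (colsp (D * P) == colsp (A ^+ k))%MS.
  by apply/andP; split; apply/colsp_subP; [exists (D ^+ k.+1 * P) | exists (A ^+ k.+1)].
split; rewrite ?mulmxE //.
- have -> : D * P * A * (D * P) = D * (P * (A * D)) * P by rewrite !mulrA.
  by rewrite drazin_comm (mulrA P) projP_drazin -drazin_comm mulrA drazin_outer.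
- have ctmx_DP : ctmx (D * P) = A ^+ k * (mpinv (A ^+ k) * ctmx D).
    by rewrite -mulmxE ctmxM ctmx_projP mulmxA.
  have sub_k : (colsp (ctmx (D * P)) <= colsp (A ^+ k))%MS.
    by apply/colsp_subP; exists (mpinv (A ^+ k) * ctmx D).
  rewrite -(mxrank_leqif_eq sub_k).2 -(eqmx_rank colsp_DP).
  by rewrite [\rank (colsp (ctmx _))]mxrank_colsp mxrank_ctmx mxrank_colsp.
Qed.

Lemma is_coreEP_uniq X : is_coreEP A X -> X = D * P.
Proof.
rewrite /is_coreEP !mulmxE => -[XAX /andP [/colsp_subP [Z1 XZ1] /colsp_subP [Z2 KZ2]]
  /andP [/colsp_subP [Z3 XZ3] _]].
have [Y AY] := ind_rinv A.
have XP : X * P = X.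
  by rewrite -[X]ctmxK XZ3 -!mulmxE ctmxM -mulmxA mulmxE ctmx_mul_projP.
have DAX : D * A * X = X.
  by rewrite XZ1 mulmxE !mulrA -(mulrA D) -exprS drazin_exprS.
have K_AXZ : A ^+ k = A * X * (Z2 * Y) by rewrite -AY exprS KZ2 mulmxE !mulrA.
have AXAX : A * X * (A * X) = A * X by rewrite -mulrA (mulrA X) XAX.
have AXP : A * X * P = P by rewrite mulrA [in LHS]K_AXZ mulrA AXAX -K_AXZ.
by rewrite -XP -{1}DAX -!mulrA (mulrA A) AXP.
Qed.

Lemma coreEP_drazin : coreEP A = D * P.
Proof.
by apply: is_coreEP_uniq; apply: (xgetPex 0); exists (D * P); exact: is_coreEP_drazin.
Qed.

Lemma mul_coreEP : A * Ce = P.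
Proof.
by rewrite coreEP_drazin mulrA drazin_comm projPE mulrA -(mulrA D) -exprS drazin_exprS.
Qed.

Lemma coreEP_projP : Ce * P = Ce.
Proof. by rewrite coreEP_drazin -mulrA projP_idem. Qed.

Lemma projP_coreEP i : projP (A ^+ i) * Ce = Ce.
Proof.
rewrite coreEP_drazin (drazin_range drazin_outer drazin_comm k).
by rewrite 2!(mulrA (projP _)) projP_expr_ind.
Qed.

Lemma coreEP_exprS i : (k <= i)%N -> Ce * A ^+ i.+1 = A ^+ i.
Proof.
move=> ki; rewrite coreEP_drazin -mulrA projP_expr_ind ?(leqW ki) //.
exact: linv_exprS drazin_exprS _ ki.
Qed.

Lemma coreEP_exprS_projP j : Ce * A ^+ j.+1 * P = A ^+ j * P.
Proof.
rewrite projPE !mulrA -(mulrA Ce) -exprD addSn coreEP_exprS ?leq_addl //.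
by rewrite exprD.
Qed.

Lemma coreEPX_drazin j : Ce ^+ j.+1 = D ^+ j.+1 * P.
Proof.
elim: j => [|j IHj]; first by rewrite !expr1 coreEP_drazin.
have PDX : P * D ^+ j.+1 = D ^+ j.+1 by rewrite exprS mulrA projP_drazin.
by rewrite exprS IHj coreEP_drazin -mulrA (mulrA P) PDX mulrA -exprS.
Qed.

Lemma projP_coreEPX i j : projP (A ^+ i) * Ce ^+ j.+1 = Ce ^+ j.+1.
Proof. by rewrite exprS mulrA projP_coreEP. Qed.

Lemma coreEPX_projP j : Ce ^+ j.+1 * P = Ce ^+ j.+1.
Proof. by rewrite exprSr -mulrA coreEP_projP. Qed.

Lemma coreEPX_exprX_projP j : Ce ^+ j * A ^+ j * P = P.
Proof.
elim: j => [|j IHj]; first by rewrite !expr0 !mul1r.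
by rewrite exprSr -!mulrA (mulrA Ce) coreEP_exprS_projP mulrA IHj.
Qed.

Lemma exprS_coreEPS j : A ^+ j.+1 * Ce ^+ j.+1 = P.
Proof.
elim: j => [|j IHj]; first by rewrite !expr1 mul_coreEP.
by rewrite exprSr (exprS Ce) -mulrA (mulrA A) mul_coreEP projP_coreEPX.
Qed.

Lemma coreEPX_exprX_coreEPS i j : Ce ^+ j * A ^+ j * Ce ^+ i.+1 = Ce ^+ i.+1.
Proof. by rewrite -(projP_coreEPX k i) mulrA coreEPX_exprX_projP. Qed.

End CoreEP.

Section WeakCoreInverse.
Variables (C : numClosedFieldType) (n : nat) (A : 'M[C]_n) (m : nat).
Local Notation k := (ind A).
Local Notation P := (projP (A ^+ ind A)).
Local Notation Q := (projP (A ^+ m)).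
Local Notation Ce := (coreEP A).
Local Notation G := (wg A m).
Local Notation W := (wcore A m).

Lemma wgE : G = Ce ^+ m.+1 * A ^+ m.
Proof. by []. Qed.

Lemma wcoreE : W = G * Q.
Proof. by []. Qed.

Lemma mul_wg : A * G = P * (Ce ^+ m * A ^+ m).
Proof. by rewrite wgE exprS -mulrA mulrA mul_coreEP. Qed.

Lemma mul_wg_projP : A * G * P = P.
Proof. by rewrite mul_wg -mulrA coreEPX_exprX_projP projP_idem. Qed.

Lemma projP_mul_wg i : projP (A ^+ i) * (A * G) = A * G.
Proof. by rewrite mul_wg mulrA projP_projP_ind. Qed.

Lemma projP_wg i : projP (A ^+ i) * G = G.
Proof. by rewrite wgE mulrA projP_coreEPX. Qed.

Lemma wg_outer : G * A * G = G.
Proof.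
by rewrite wgE -(mulrA _ (A ^+ m)) -exprSr mulrA coreEPX_exprX_coreEPS.
Qed.

Lemma wcore_outer : W * A * W = W.
Proof.
have -> : W * A * W = G * (Q * (A * G)) * Q by rewrite wcoreE !mulrA.
by rewrite projP_mul_wg mulrA wg_outer.
Qed.

Lemma wcore_inner_core_part : A * Ce * A * W * (A * Ce * A) = A * Ce * A.
Proof.
rewrite mul_coreEP.
have -> : P * A * W * (P * A) = P * (A * G * (Q * P)) * A by rewrite wcoreE !mulrA.
by rewrite projP_projP_ind mul_wg_projP projP_idem.
Qed.

Lemma wcore_outer_core_part : W * (A * Ce * A) * W = W.
Proof.
rewrite mul_coreEP.
have -> : W * (P * A) * W = G * (Q * P * (A * G)) * Q by rewrite wcoreE !mulrA.
by rewrite projP_projP_ind projP_mul_wg mulrA wg_outer.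
Qed.

Lemma mul_wcore_expr2 : A * W ^+ 2 = W.
Proof.
have -> : A * W ^+ 2 = A * G * (Q * G) * Q by rewrite wcoreE expr2 !mulrA.
rewrite projP_wg mul_wg wcoreE wgE.
have -> : P * (Ce ^+ m * A ^+ m) * (Ce ^+ m.+1 * A ^+ m) * Q =
          P * (Ce ^+ m * A ^+ m * Ce ^+ m.+1) * A ^+ m * Q by rewrite !mulrA.
by rewrite coreEPX_exprX_coreEPS projP_coreEPX.
Qed.

Lemma wcore_mul_exprS l : (k <= l)%N -> W * A ^+ l.+1 = A ^+ l.
Proof.
move=> kl; rewrite wcoreE wgE -mulrA projP_expr_ind ?(leqW kl) //.
by rewrite -mulrA -exprD addnC addSnnS (linv_exprD (coreEP_exprS kl)).
Qed.

Lemma wcore_drazinE l : (k <= l)%N ->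
  W = drazin A ^+ m.+1 * projP (A ^+ l) * A ^+ m * Q.
Proof. by move=> kl; rewrite (projP_expr_ind_eq kl) -coreEPX_drazin. Qed.

Lemma wcore_mpinvE l : (k <= l)%N ->
  W = A ^+ l * mpinv (A ^+ (l + m).+1) * A ^+ m * Q.
Proof.
move=> kl; have klm : (k <= (l + m).+1)%N by rewrite (leq_trans kl) // leqW ?leq_addr.
rewrite -{1}(linv_exprD (coreEP_exprS kl) m.+1) addnS -(mulrA (Ce ^+ m.+1)) -projPE.
by rewrite (projP_expr_ind_eq klm) coreEPX_projP.
Qed.

Lemma colsp_wcore : (colsp W == colsp (A ^+ k))%MS.
Proof.
apply/andP; split; apply/colsp_subP.
  by exists (mpinv (A ^+ k) * W); rewrite mulmxE mulrA -projPE wcoreE mulrA projP_wg.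
by exists (A ^+ k.+1); rewrite mulmxE wcore_mul_exprS.
Qed.

Lemma mxrank_wcore : \rank W = \rank (A ^+ k).
Proof. by rewrite -mxrank_colsp (eqmx_rank colsp_wcore) mxrank_colsp. Qed.

Lemma nullsp_wcore : (nullsp W == nullsp (ctmx (A ^+ k) * A ^+ m * Q))%MS.
Proof.
apply/andP; split.
  have -> : ctmx (A ^+ k) * A ^+ m * Q = (ctmx (A ^+ k) * A ^+ m.+1) *m W.
    rewrite mulmxE wcoreE wgE.
    have -> : ctmx (A ^+ k) * A ^+ m.+1 * (Ce ^+ m.+1 * A ^+ m * Q) =
              ctmx (A ^+ k) * (A ^+ m.+1 * Ce ^+ m.+1) * A ^+ m * Q by rewrite !mulrA.
    by rewrite exprS_coreEPS ctmx_mul_projP.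
  exact: nullsp_mulmx.
have -> : W = (Ce ^+ m.+1 * ctmx (mpinv (A ^+ k))) *m (ctmx (A ^+ k) * A ^+ m * Q).
  by rewrite mulmxE wcoreE wgE -[in LHS]coreEPX_projP (projP_ctmxE (A ^+ k)) !mulrA.
exact: nullsp_mulmx.
Qed.

Lemma wcore_mul_exprSm : W * A ^+ m.+1 = Ce ^+ m.+1 * A ^+ (2 * m).+1.
Proof.
rewrite wcoreE wgE -mulrA projP_fix ?colsp_exprS_sub //.
by rewrite -mulrA -exprD addnS mul2n addnn.
Qed.

End WeakCoreInverse.

Theorem theorem4p7 (n : nat) (A : 'M[Cplx]_n) (l m : nat) :
  (ind A <= l)%N -> (1 <= m)%N ->
  let k := ind A in
  let Wm := wcore A m in
  let A1 := A *m coreEP A *m A in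
  (* (a) *) Wm *m A *m Wm = Wm /\
      (* (b) *) (A1 *m Wm *m A1 = A1 /\ Wm *m A1 *m Wm = Wm) /\
      (* (c) *) A *m (Wm ^+ 2) = Wm /\
      (* (d) *) Wm *m A ^+ l.+1 = A ^+ l /\
      (* (e) *) Wm = (drazin A) ^+ m.+1 *m projP (A ^+ l) *m A ^+ m *m projP (A ^+ m) /\
      (* (f) *) Wm = A ^+ l *m mpinv (A ^+ (l + m).+1) *m A ^+ m *m projP (A ^+ m) /\
      (* (g) *) \rank Wm = \rank (A ^+ k) /\
      (* (h) *) (colsp Wm == colsp (A ^+ k))%MS /\
      (* (i) *) (nullsp Wm == nullsp (ctmx (A ^+ k) *m A ^+ m *m projP (A ^+ m)))%MS /\
      (* (j) *) Wm *m A ^+ m.+1 = (coreEP A) ^+ m.+1 *m A ^+ (2 * m).+1.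
Proof.
(* Every item holds for m = 0 as well. *)
move=> kl _ k Wm A1; rewrite {}/k {}/Wm {}/A1 !mulmxE.
split; first exact: wcore_outer.
split; first by split; [exact: wcore_inner_core_part | exact: wcore_outer_core_part].
split; first exact: mul_wcore_expr2.
split; first exact: wcore_mul_exprS.
split; first exact: wcore_drazinE.
split; first exact: wcore_mpinvE.
split; first exact: mxrank_wcore.
split; first exact: colsp_wcore.
split; first exact: nullsp_wcore.
exact: wcore_mul_exprSm.
Qed.
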